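(* Suppose $x_j(0)=y_j(0)=0$ for all individuals $j=1,\dots,n$, and let $i$ be an individual with $\alpha_i=\min_j\alpha_j$. If individual $i$ acts for the first time at time $t$, then every other individual has acted (for the first time) at some time $\le t$. Equivalently, an individual with larger $\alpha$ takes its first action no later than an individual with smaller $\alpha$.
   Context: Model: Fix an integer $n\ge 2$ (number of individuals) and parameters $\sigma_A,\sigma_S\ge 0$, $\sigma_C>0$, $\mu_S\in[0,1]$, $\mu_C>0$, $r>0$, $\tau\in(0,1)$, $\alpha_1,\dots,\alpha_n\in(-1,1)$. Individual $i$ has state $(x_i(t),y_i(t))$, $x_i\in(-1,1)$, $y_i\in[0,1]$, and $\gamma_i(t)=\frac{1}{n-1}\sum_{j\neq i}y_j(t)$. Between action events the state evolves by $\dot x_i=[\sigma_A\alpha_i+\sigma_S(\gamma_i-\mu_S)]\,\sigma_C(\gamma_i+\mu_C)(1-x_i)(1+x_i)$, $\dot y_i=-ry_i$. Individual $i$ ''acts'' at a time $t$ when $x_i(t)$ reaches the threshold $\tau$ (i.e. $x_i(t)\ge\tau$); immediately afterwards $x_i$ is reset to $0$ and $y_i$ is reset to $1$, and the continuous evolution resumes from the new state. *)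

From Stdlib Require Import Reals Lra List.
From Coquelicot Require Import Coquelicot.
Open Scope R_scope.

(* Individuals are indexed by natural numbers 0 <= j < n.
   A state trajectory is given by X Y : nat -> R -> R,
   X j t = x_j(t), Y j t = y_j(t) (post-reset values at action times). *)

Definition sum_others (n : nat) (Y : nat -> R -> R) (i : nat) (t : R) : R :=
  fold_right Rplus 0
    (map (fun j => if Nat.eq_dec j i then 0 else Y j t) (seq 0 n)).

Definition gamma (n : nat) (Y : nat -> R -> R) (i : nat) (t : R) : R :=
  / (INR n - 1) * sum_others n Y i t.

Definition xdot (sA sS sC muS muC ai g x : R) : R :=
  (sA * ai + sS * (g - muS)) * sC * (g + muC) * (1 - x) * (1 + x).

Definition right_deriv (f : R -> R) (t l : R) : Prop :=
  filterlim (fun h => (f (t + h) - f t) / h) (at_right 0) (locally l).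

(* individual i acts at time t > 0: x_i reaches the threshold tau from
   below as s -> t^- (the value X i t is then the post-reset value) *)
Definition acts (X : nat -> R -> R) (tau : R) (i : nat) (t : R) : Prop :=
  0 < t /\ filterlim (X i) (at_left t) (locally tau).

(* (X, Y) is a trajectory of the hybrid model on [0, +oo):
   - states stay in the model's state space, with x_i < tau (whenever x_i
     reaches tau it is immediately reset);
   - for t >= 0, x_i and y_i have right derivatives given by the ODE at the
     current (post-reset) state;
   - for t > 0, either x_i, y_i are left-continuous at t (no action), or
     x_i(s) -> tau as s -> t^- and the state is reset: x_i(t)=0, y_i(t)=1. *)
Definition is_solution (n : nat) (sA sS sC muS muC r tau : R)
    (alpha : nat -> R) (X Y : nat -> R -> R) : Prop :=
  forall i, (i < n)%nat ->
  (forall t, 0 <= t ->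
     -1 < X i t < tau /\ 0 <= Y i t <= 1 /\
     right_deriv (X i) t (xdot sA sS sC muS muC (alpha i) (gamma n Y i t) (X i t)) /\
     right_deriv (Y i) t (- r * Y i t)) /\
  (forall t, 0 < t ->
     (filterlim (X i) (at_left t) (locally (X i t)) /\
      filterlim (Y i) (at_left t) (locally (Y i t)))
     \/
     (filterlim (X i) (at_left t) (locally tau) /\ X i t = 0 /\ Y i t = 1)).

From Stdlib Require Import Reals Lra Lia List Classical.
From Coquelicot Require Import Coquelicot.
Open Scope R_scope.

(* Before either of two individuals i, j acts, their activities y_i, y_j solve
   the same linear equation y' = -r y from the same initial value, so they
   coincide, and hence so do gamma_i and gamma_j.  With a common gamma, the
   drift of x is increasing in alpha and Lipschitz in x, so a comparison
   principle for left-continuous, right-differentiable functions (proved by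
   real induction against the barrier eps e^((K+1)s)) gives x_i <= x_j as long
   as neither acts.  If j has not acted before i's first action at t, then x_j
   is squeezed between x_i -> tau and tau, so j acts at t. *)

Lemma at_left_iff (s : R) (P : R -> Prop) :
  at_left s P <-> exists d, 0 < d /\ forall u, s - d < u < s -> P u.
Proof.
  split.
  - intros [e He]. exists e. split; [apply cond_pos|].
    intros u Hu. apply He; [|lra]. change (Rabs (u - s) < e). apply Rabs_def1; lra.
  - intros [d [Hd HP]]. exists (mkposreal d Hd). intros u Hu Hus.
    change (Rabs (u - s) < d) in Hu. apply Rabs_def2 in Hu. apply HP. lra.
Qed.

Lemma at_right_ex (s : R) (P : R -> Prop) :
  at_right s P -> exists d, 0 < d /\ forall u, s < u < s + d -> P u.
Proof.
  intros [e He]. exists e. split; [apply cond_pos|].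
  intros u Hu. apply He; [|lra]. change (Rabs (u - s) < e). apply Rabs_def1; lra.
Qed.

Lemma filterlim_locally_Rabs {T} (F : (T -> Prop) -> Prop) {FF : Filter F}
    (f : T -> R) (l : R) :
  filterlim f F (locally l) <-> forall e, 0 < e -> F (fun x => Rabs (f x - l) < e).
Proof.
  rewrite filterlim_locally. split.
  - intros H e He. exact (H (mkposreal e He)).
  - intros H e. exact (H e (cond_pos e)).
Qed.

Lemma filterlim_Rminus {T} (F : (T -> Prop) -> Prop) {FF : Filter F}
    (f g : T -> R) (a b : R) :
  filterlim f F (locally a) -> filterlim g F (locally b) ->
  filterlim (fun x => f x - g x) F (locally (a - b)).
Proof.
  intros Hf Hg.
  apply (filterlim_comp_2 (G := locally a) (H := locally (opp b))
           f (fun x => opp (g x)) plus Hf).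
  - exact (filterlim_comp _ _ _ g opp F (locally b) (locally (opp b)) Hg (filterlim_opp b)).
  - exact (filterlim_plus a (opp b)).
Qed.

Lemma right_deriv_minus (f g : R -> R) (s a b : R) :
  right_deriv f s a -> right_deriv g s b ->
  right_deriv (fun u => f u - g u) s (a - b).
Proof.
  intros Hf Hg. eapply filterlim_ext; [|exact (filterlim_Rminus _ _ _ _ _ Hf Hg)].
  intros h. simpl. unfold Rdiv. ring.
Qed.

Lemma right_deriv_upper (f : R -> R) (s l e : R) :
  right_deriv f s l -> 0 < e ->
  exists d, 0 < d /\ forall h, 0 < h < d -> f (s + h) < f s + h * (l + e).
Proof.
  intros Hf He.
  destruct (at_right_ex _ _ (proj1 (filterlim_locally_Rabs _ _ _) Hf e He))
    as [d [Hd Hq]].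
  exists d. split; [exact Hd|]. intros h Hh.
  specialize (Hq h ltac:(lra)). apply Rabs_def2 in Hq.
  replace (f (s + h)) with (f s + h * ((f (s + h) - f s) / h)) by (field; lra).
  apply Rplus_lt_compat_l, Rmult_lt_compat_l; lra.
Qed.

Lemma right_deriv_below (f : R -> R) (s l m : R) :
  right_deriv f s l -> f s < m ->
  exists d, 0 < d /\ forall h, 0 < h < d -> f (s + h) < m.
Proof.
  intros Hf Hm. destruct (right_deriv_upper f s l 1 Hf Rlt_0_1) as [d [Hd Hup]].
  set (M := Rabs l + 1).
  assert (HM : 0 < M) by (unfold M; pose proof (Rabs_pos l); lra).
  exists (Rmin d ((m - f s) / M)). split.
  { apply Rmin_pos; [lra|]. apply Rdiv_lt_0_compat; lra. }
  intros h [Hh0 Hh].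
  pose proof (Rmin_l d ((m - f s) / M)) as Hhd.
  pose proof (Rmin_r d ((m - f s) / M)) as HhM.
  specialize (Hup h ltac:(lra)).
  assert (h * (l + 1) <= h * M) by (apply Rmult_le_compat_l; unfold M; pose proof (Rle_abs l); lra).
  assert (h * M < m - f s).
  { replace (m - f s) with ((m - f s) / M * M) by (field; lra).
    apply Rmult_lt_compat_r; lra. }
  lra.
Qed.

Lemma real_induction (P : R -> Prop) (a b : R) :
  a <= b -> P a ->
  (forall c, a < c <= b -> ~ P c ->
     exists d, 0 < d /\ forall s, c - d < s < c -> ~ P s) ->
  (forall c, a <= c < b -> P c ->
     exists d, 0 < d /\ forall h, 0 < h < d -> P (c + h)) ->
  P b.
Proof.
  intros Hab Ha Hleft Hright.
  set (S := fun s => a <= s <= b /\ P s).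
  destruct (completeness S) as [c [Hub Hlub]].
  { exists b. intros s [Hs _]. lra. }
  { exists a. split; [lra | exact Ha]. }
  assert (Hac : a <= c) by (apply Hub; split; [lra | exact Ha]).
  assert (Hcb : c <= b) by (apply Hlub; intros s [Hs _]; lra).
  assert (Hc : P c).
  { destruct (classic (P c)) as [Hc | Hc]; [exact Hc | exfalso].
    assert (Hac' : a < c) by (destruct Hac as [Hac | <-]; [exact Hac | contradiction]).
    destruct (Hleft c (conj Hac' Hcb) Hc) as [d [Hd Hnot]].
    assert (c <= c - d); [|lra].
    apply Hlub. intros s [Hs HPs].
    destruct (Rle_or_lt s (c - d)) as [Hsd | Hsd]; [exact Hsd | exfalso].
    assert (Hsc : s <= c) by (apply Hub; split; assumption).
    destruct Hsc as [Hsc | ->]; [exact (Hnot s (conj Hsd Hsc) HPs) | contradiction]. }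
  destruct Hcb as [Hcb | ->]; [exfalso | exact Hc].
  destruct (Hright c (conj Hac Hcb) Hc) as [d [Hd Hnext]].
  assert (Hmin : 0 < Rmin d (b - c)) by (apply Rmin_pos; lra).
  pose proof (Rmin_l d (b - c)). pose proof (Rmin_r d (b - c)).
  assert (c + Rmin d (b - c) / 2 <= c); [|lra].
  apply Hub. split; [lra|]. apply Hnext. lra.
Qed.

Lemma right_deriv_exp_bound (f D : R -> R) (a b K eps : R) :
  a <= b -> 0 <= K -> 0 < eps -> f a <= 0 ->
  (forall s, a < s <= b -> filterlim f (at_left s) (locally (f s))) ->
  (forall s, a <= s < b -> right_deriv f s (D s)) ->
  (forall s, a <= s < b -> 0 < f s -> D s <= K * f s) ->
  f b <= eps * exp ((K + 1) * (b - a)).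
Proof.
  intros Hab HK Heps Ha Hlc Hrd Hbd.
  set (phi := fun s => eps * exp ((K + 1) * (s - a))).
  assert (Hphi_pos : forall s, 0 < phi s).
  { intros s. apply Rmult_lt_0_compat; [exact Heps | apply exp_pos]. }
  assert (Hphi_mono : forall x y, x < y -> phi x < phi y).
  { intros x y Hxy. apply Rmult_lt_compat_l; [exact Heps|]. apply exp_increasing. nra. }
  assert (Hphi_shift : forall s h, phi (s + h) = phi s * exp ((K + 1) * h)).
  { intros s h. unfold phi. rewrite Rmult_assoc, <- exp_plus. f_equal. f_equal. ring. }
  apply (real_induction (fun s => f s <= phi s) a b);
    [exact Hab | pose proof (Hphi_pos a); lra | |].
  - intros c Hc Hnot.
    destruct (proj1 (at_left_iff _ _)
      (proj1 (filterlim_locally_Rabs _ _ _) (Hlc c Hc) (f c - phi c) ltac:(lra)))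
      as [d [Hd Hnear]].
    exists d. split; [exact Hd|]. intros s Hs Hfs.
    specialize (Hnear s Hs). apply Rabs_def2 in Hnear.
    specialize (Hphi_mono s c ltac:(lra)). lra.
  - intros c Hc [Hlt | Heq].
    + destruct (right_deriv_below f c (D c) (phi c) (Hrd c Hc) Hlt) as [d [Hd Hbelow]].
      exists d. split; [exact Hd|]. intros h Hh.
      specialize (Hbelow h Hh). specialize (Hphi_mono c (c + h) ltac:(lra)). lra.
    + destruct (right_deriv_upper f c (D c) (phi c) (Hrd c Hc) (Hphi_pos c))
        as [d [Hd Hup]].
      exists d. split; [exact Hd|]. intros h Hh.
      specialize (Hup h Hh). rewrite Hphi_shift.
      assert (HD : D c <= K * phi c).
      { rewrite <- Heq. apply Hbd; [exact Hc | rewrite Heq; apply Hphi_pos]. }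
      assert (Hexp : 1 + (K + 1) * h < exp ((K + 1) * h)) by (apply exp_ineq1; nra).
      specialize (Hphi_pos c). nra.
Qed.

Lemma right_deriv_nonpos (f D : R -> R) (a b K : R) :
  a <= b -> 0 <= K -> f a <= 0 ->
  (forall s, a < s <= b -> filterlim f (at_left s) (locally (f s))) ->
  (forall s, a <= s < b -> right_deriv f s (D s)) ->
  (forall s, a <= s < b -> 0 < f s -> D s <= K * f s) ->
  f b <= 0.
Proof.
  intros Hab HK Ha Hlc Hrd Hbd.
  destruct (Rle_or_lt (f b) 0) as [Hb | Hb]; [exact Hb | exfalso].
  set (E := exp ((K + 1) * (b - a))).
  assert (HE : 0 < E) by apply exp_pos.
  assert (Hbound := right_deriv_exp_bound f D a b K (f b / (2 * E)) Hab HK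
                      ltac:(apply Rdiv_lt_0_compat; lra) Ha Hlc Hrd Hbd).
  fold E in Hbound. replace (f b / (2 * E) * E) with (f b / 2) in Hbound by (field; lra).
  lra.
Qed.

Lemma right_deriv_comparison (g h Dg Dh : R -> R) (a b K : R) :
  a <= b -> 0 <= K -> g a <= h a ->
  (forall s, a < s <= b -> filterlim g (at_left s) (locally (g s))) ->
  (forall s, a < s <= b -> filterlim h (at_left s) (locally (h s))) ->
  (forall s, a <= s < b -> right_deriv g s (Dg s)) ->
  (forall s, a <= s < b -> right_deriv h s (Dh s)) ->
  (forall s, a <= s < b -> h s < g s -> Dg s - Dh s <= K * (g s - h s)) ->
  g b <= h b.
Proof.
  intros Hab HK Ha Hlg Hlh Hdg Hdh Hbd.
  enough (g b - h b <= 0) by lra.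
  apply (right_deriv_nonpos (fun s => g s - h s) (fun s => Dg s - Dh s) a b K);
    [exact Hab | exact HK | lra | | | ].
  - intros s Hs. exact (filterlim_Rminus _ _ _ _ _ (Hlg s Hs) (Hlh s Hs)).
  - intros s Hs. exact (right_deriv_minus _ _ _ _ _ (Hdg s Hs) (Hdh s Hs)).
  - intros s Hs Hpos. apply Hbd; [exact Hs | lra].
Qed.

Lemma fold_Rplus_map_le (F G : nat -> R) (l : list nat) :
  (forall j, In j l -> F j <= G j) ->
  fold_right Rplus 0 (map F l) <= fold_right Rplus 0 (map G l).
Proof.
  induction l as [|k l IH]; intros HFG; simpl; [lra|].
  apply Rplus_le_compat; [apply HFG; left; reflexivity|].
  apply IH. intros j Hj. apply HFG. right. exact Hj.
Qed.

Lemma fold_Rplus_map_const (c : R) (l : list nat) :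
  fold_right Rplus 0 (map (fun _ => c) l) = INR (length l) * c.
Proof.
  induction l as [|k l IH]; cbn [map fold_right length]; [simpl; ring|].
  rewrite IH, S_INR. ring.
Qed.

Lemma fold_Rplus_map_drop (F : nat -> R) (i : nat) (l : list nat) :
  fold_right Rplus 0 (map (fun j => if Nat.eq_dec j i then 0 else F j) l)
    + INR (count_occ Nat.eq_dec l i) * F i
  = fold_right Rplus 0 (map F l).
Proof.
  induction l as [|k l IH]; cbn [map fold_right count_occ]; [simpl; ring|].
  destruct (Nat.eq_dec k i) as [-> | Hki].
  - rewrite S_INR, <- IH. ring.
  - rewrite <- IH. ring.
Qed.

Lemma count_occ_seq_lt (n i : nat) :
  (i < n)%nat -> count_occ Nat.eq_dec (seq 0 n) i = 1%nat.
Proof.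
  intros Hi. apply (proj1 (NoDup_count_occ' Nat.eq_dec _) (seq_NoDup n 0)).
  apply in_seq. lia.
Qed.

Lemma sum_others_add_self (n : nat) (Y : nat -> R -> R) (i : nat) (t : R) :
  (i < n)%nat ->
  sum_others n Y i t + Y i t = fold_right Rplus 0 (map (fun j => Y j t) (seq 0 n)).
Proof.
  intros Hi. unfold sum_others.
  rewrite <- (fold_Rplus_map_drop (fun j => Y j t) i), count_occ_seq_lt by exact Hi.
  simpl. ring.
Qed.

Lemma gamma_eq (n : nat) (Y : nat -> R -> R) (i j : nat) (t : R) :
  (i < n)%nat -> (j < n)%nat -> Y i t = Y j t -> gamma n Y i t = gamma n Y j t.
Proof.
  intros Hi Hj HY. unfold gamma. f_equal.
  pose proof (sum_others_add_self n Y i t Hi).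
  pose proof (sum_others_add_self n Y j t Hj).
  lra.
Qed.

Lemma gamma_bounds (n : nat) (Y : nat -> R -> R) (i : nat) (t : R) :
  (2 <= n)%nat -> (i < n)%nat ->
  (forall k, (k < n)%nat -> 0 <= Y k t <= 1) ->
  0 <= gamma n Y i t <= 1.
Proof.
  intros Hn Hi HY.
  assert (Hlow : 0 <= sum_others n Y i t).
  { unfold sum_others.
    apply (Rle_trans _ (fold_right Rplus 0 (map (fun _ => 0) (seq 0 n)))).
    { rewrite fold_Rplus_map_const. lra. }
    apply fold_Rplus_map_le. intros k Hk.
    destruct (Nat.eq_dec k i); [lra|]. apply HY. apply in_seq in Hk. lia. }
  assert (Hup : sum_others n Y i t <= INR n - 1).
  { pose proof (fold_Rplus_map_drop (fun _ => 1) i (seq 0 n)) as Hone.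
    rewrite count_occ_seq_lt, fold_Rplus_map_const, length_seq in Hone by exact Hi.
    unfold sum_others.
    eapply Rle_trans; [apply (fold_Rplus_map_le _ (fun j => if Nat.eq_dec j i then 0 else 1))|].
    - intros k Hk. destruct (Nat.eq_dec k i); [lra|]. apply HY. apply in_seq in Hk. lia.
    - simpl in Hone. lra. }
  assert (Hn2 : 2 <= INR n) by (apply (le_INR 2) in Hn; simpl in Hn; lra).
  unfold gamma. split.
  - apply Rmult_le_pos; [apply Rlt_le, Rinv_0_lt_compat; lra | exact Hlow].
  - apply (Rle_trans _ (/ (INR n - 1) * (INR n - 1))); [|right; field; lra].
    apply Rmult_le_compat_l; [apply Rlt_le, Rinv_0_lt_compat; lra | exact Hup].
Qed.

Lemma logistic_difference_le (A B M x y : R) :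
  A <= B -> Rabs B <= M -> -1 < y -> y < x -> x < 1 ->
  A * (1 - x) * (1 + x) - B * (1 - y) * (1 + y) <= 2 * M * (x - y).
Proof.
  intros HAB HB Hy Hyx Hx.
  assert (Hdrift : (A - B) * ((1 - x) * (1 + x)) <= 0).
  { apply Rmult_le_0_r; [lra|]. apply Rmult_le_pos; lra. }
  assert (Hspread : - B * (x + y) <= 2 * M).
  { apply (Rle_trans _ (Rabs (- B * (x + y)))); [apply Rle_abs|].
    rewrite Rabs_mult, Rabs_Ropp.
    assert (Rabs (x + y) < 2) by (apply Rabs_def1; lra).
    pose proof (Rabs_pos B). pose proof (Rabs_pos (x + y)). nra. }
  nra.
Qed.

Lemma xdot_difference_le (sA sS sC muS muC ai aj g xi xj : R) :
  0 <= sA -> 0 <= sS -> 0 < sC -> 0 <= muS <= 1 -> 0 < muC ->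
  ai <= aj -> -1 < aj < 1 -> 0 <= g <= 1 ->
  -1 < xj -> xj < xi -> xi < 1 ->
  xdot sA sS sC muS muC ai g xi - xdot sA sS sC muS muC aj g xj
    <= 2 * ((sA + sS) * sC * (1 + muC)) * (xi - xj).
Proof.
  intros HsA HsS HsC HmuS HmuC Ha Haj Hg Hxj Hx Hxi. unfold xdot.
  apply logistic_difference_le; [| | exact Hxj | exact Hx | exact Hxi].
  - apply Rmult_le_compat_r; [lra|]. apply Rmult_le_compat_r; [lra|]. nra.
  - rewrite !Rabs_mult, (Rabs_right sC), (Rabs_right (g + muC)) by lra.
    apply Rmult_le_compat; [| lra | | lra].
    + apply Rmult_le_pos; [apply Rabs_pos | lra].
    + apply Rmult_le_compat_r; [lra|]. apply Rabs_le. nra.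
Qed.

Definition no_action_before (X : nat -> R -> R) (tau : R) (j : nat) (t : R) : Prop :=
  forall s, 0 < s < t -> ~ acts X tau j s.

Lemma acts_of_le (X : nat -> R -> R) (tau : R) (i j : nat) (t : R) :
  acts X tau i t -> (forall u, 0 < u < t -> X i u <= X j u <= tau) -> acts X tau j t.
Proof.
  intros [Ht Hi] Hle. split; [exact Ht|].
  apply (filterlim_le_le (X i) (X j) (fun _ => tau) (Finite tau)); [| exact Hi | apply filterlim_const].
  apply at_left_iff. exists t. split; [exact Ht|]. intros u Hu. apply Hle. lra.
Qed.

Section Trajectory.

Context {n : nat} {sA sS sC muS muC r tau : R} {alpha : nat -> R} {X Y : nat -> R -> R}.
Hypothesis Hsol : is_solution n sA sS sC muS muC r tau alpha X Y.

Lemma left_continuous_before_action (j : nat) (t : R) :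
  (j < n)%nat -> no_action_before X tau j t ->
  forall s, 0 < s < t ->
    filterlim (X j) (at_left s) (locally (X j s)) /\
    filterlim (Y j) (at_left s) (locally (Y j s)).
Proof.
  intros Hj Hquiet s Hs.
  destruct (proj2 (Hsol j Hj) s (proj1 Hs)) as [Hcont | [Hreach _]]; [exact Hcont|].
  exfalso. exact (Hquiet s Hs (conj (proj1 Hs) Hreach)).
Qed.

Lemma activity_le (i j : nat) (t : R) :
  0 <= r -> (i < n)%nat -> (j < n)%nat ->
  no_action_before X tau i t -> no_action_before X tau j t ->
  Y i 0 <= Y j 0 -> forall s, 0 <= s < t -> Y i s <= Y j s.
Proof.
  intros Hr Hi Hj Hqi Hqj H0 s Hs.
  apply (right_deriv_comparison (Y i) (Y j) (fun u => - r * Y i u) (fun u => - r * Y j u)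
           0 s 0); [lra | lra | exact H0 | | | | | ].
  - intros u Hu. apply (left_continuous_before_action i t Hi Hqi). lra.
  - intros u Hu. apply (left_continuous_before_action j t Hj Hqj). lra.
  - intros u Hu. apply (proj1 (Hsol i Hi) u). lra.
  - intros u Hu. apply (proj1 (Hsol j Hj) u). lra.
  - intros u _ Hlt. nra.
Qed.

Hypotheses (HsA : 0 <= sA) (HsS : 0 <= sS) (HsC : 0 < sC)
  (HmuS : 0 <= muS <= 1) (HmuC : 0 < muC) (Hn : (2 <= n)%nat) (Htau : tau < 1).

Lemma opinion_le (i j : nat) (t : R) :
  (i < n)%nat -> (j < n)%nat -> alpha i <= alpha j -> -1 < alpha j < 1 ->
  no_action_before X tau i t -> no_action_before X tau j t ->
  (forall s, 0 <= s < t -> Y i s = Y j s) ->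
  X i 0 <= X j 0 -> forall s, 0 <= s < t -> X i s <= X j s.
Proof.
  intros Hi Hj Ha Haj Hqi Hqj Hsync H0 s Hs.
  apply (right_deriv_comparison (X i) (X j)
           (fun u => xdot sA sS sC muS muC (alpha i) (gamma n Y i u) (X i u))
           (fun u => xdot sA sS sC muS muC (alpha j) (gamma n Y j u) (X j u))
           0 s (2 * ((sA + sS) * sC * (1 + muC)))); [lra | | exact H0 | | | | | ].
  - assert (0 < sC * (1 + muC)) by nra. nra.
  - intros u Hu. apply (left_continuous_before_action i t Hi Hqi). lra.
  - intros u Hu. apply (left_continuous_before_action j t Hj Hqj). lra.
  - intros u Hu. apply (proj1 (Hsol i Hi) u). lra.
  - intros u Hu. apply (proj1 (Hsol j Hj) u). lra.
  - intros u Hu Hlt.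
    rewrite <- (gamma_eq n Y i j u Hi Hj (Hsync u ltac:(lra))).
    destruct (proj1 (Hsol i Hi) u ltac:(lra)) as [[_ Hxi] _].
    destruct (proj1 (Hsol j Hj) u ltac:(lra)) as [[Hxj _] _].
    apply xdot_difference_le; try assumption; [| lra].
    apply gamma_bounds; [exact Hn | exact Hi |].
    intros k Hk. apply (proj1 (Hsol k Hk) u). lra.
Qed.

End Trajectory.

Theorem proposition3
  (n : nat) (sA sS sC muS muC r tau : R) (alpha : nat -> R)
  (Hn : (2 <= n)%nat)
  (HsA : 0 <= sA) (HsS : 0 <= sS) (HsC : 0 < sC)
  (HmuS : 0 <= muS <= 1) (HmuC : 0 < muC) (Hr : 0 < r)
  (Htau : 0 < tau < 1)
  (Halpha : forall j, (j < n)%nat -> -1 < alpha j < 1)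
  (X Y : nat -> R -> R)
  (Hsol : is_solution n sA sS sC muS muC r tau alpha X Y)
  (Hinit : forall j, (j < n)%nat -> X j 0 = 0 /\ Y j 0 = 0)
  (i : nat) (Hi : (i < n)%nat)
  (Hmin : forall j, (j < n)%nat -> alpha i <= alpha j)
  (t : R)
  (Hact : acts X tau i t)
  (Hfirst : forall s, 0 < s < t -> ~ acts X tau i s) :
  forall j, (j < n)%nat -> j <> i ->
    exists s, 0 < s <= t /\ acts X tau j s.
Proof.
  (* For j = i the witness s = t works too. *)
  intros j Hj _.
  destruct (classic (exists s, 0 < s < t /\ acts X tau j s)) as [[s [Hs Hjs]] | Hquiet].
  { exists s. split; [lra | exact Hjs]. }
  exists t. split; [pose proof (proj1 Hact); lra |].
  assert (Hqi : no_action_before X tau i t) by exact Hfirst.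
  assert (Hqj : no_action_before X tau j t) by (intros s Hs Hjs; apply Hquiet; eauto).
  destruct (Hinit i Hi) as [Xi0 Yi0], (Hinit j Hj) as [Xj0 Yj0].
  assert (Hsync : forall s, 0 <= s < t -> Y i s = Y j s).
  { intros s Hs. apply Rle_antisym.
    - apply (activity_le Hsol i j t); auto; lra.
    - apply (activity_le Hsol j i t); auto; lra. }
  apply (acts_of_le X tau i j t Hact). intros u Hu. split.
  - apply (opinion_le Hsol HsA HsS HsC HmuS HmuC Hn (proj2 Htau) i j t); auto; lra.
  - destruct (proj1 (Hsol j Hj) u ltac:(lra)) as [[_ Hlt] _]. lra.
Qed.
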